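(* Let $0<\beta\le\bar\alpha$ be constants. Let $H$ be a fixed random variable with zero mean, unit variance and a density, and for $\mu\in\mathbb{R}$, $\sigma>0$ let $Z=\mu+\sigma H$ (so $Z$ has mean $\mu$ and variance $\sigma^2$), with density $f_Z$ and c.d.f. $F_Z$. Define the value of renewable energy $$\text{VoR}(\mu,\sigma)=\bar\alpha\int_{-\infty}^{F_Z^{-1}(\beta/\bar\alpha)} z\,f_Z(z)\,dz,$$ where $F_Z^{-1}(a)=\inf\{z:F_Z(z)=a\}$. Then $\text{VoR}$ is increasing in $\mu$ and non-increasing in $\sigma$. Consequently, since $Z(t)=X(t)-w(t)$ with $w(t)$ zero-mean and independent of the renewable energy $X(t)$, the value of renewable energy is increasing with the mean of $X(t)$ and non-increasing with the variance of $X(t)$ (when the distribution of $Z(t)$ varies in such a location–scale family).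
   Context: In the model, $X(t)$ is the renewable power available in slot $t$, $w(t)=\sum_n w_n(t)$ is the aggregate zero-mean random deviation of user loads (independent of $X(t)$), $Z(t)=X(t)-w(t)$ is the effective renewable energy, $\beta$ is the day-ahead power price and $\bar\alpha$ the expected real-time power price. $\text{VoR}$ is the reduction of the minimal expected procurement cost relative to $\beta L^{\mathsf{d}}$ (the cost without renewables) when the optimal base power is positive. *)

From HB Require Import structures.
From mathcomp Require Import all_boot all_order all_algebra.
From mathcomp Require Import all_classical all_reals all_analysis.
Set Implicit Arguments. Unset Strict Implicit. Unset Printing Implicit Defensive.
Import Order.TTheory GRing.Theory Num.Theory.
Local Open Scope classical_set_scope.
Local Open Scope ring_scope.

Definition locscale d (T : measurableType d) (R : realType)
  (H : T -> R) (mu sigma : R) : T -> R := fun w => mu + sigma * H w.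

Definition is_density d (T : measurableType d) (R : realType)
  (P : probability T R) (X : T -> R) (f : R -> R) : Prop :=
  measurable_fun [set: R] f /\ (forall x, 0 <= f x) /\
  forall A : set R, measurable A ->
    P (X @^-1` A) = (\int[@lebesgue_measure R]_(x in A) (f x)%:E)%E.

Definition cdfR d (T : measurableType d) (R : realType)
  (P : probability T R) (X : T -> R) (z : R) : R :=
  fine (P [set w | X w <= z]).

(* F^{-1}(a) = inf {z : F z = a}, as an extended real (+oo if the set is empty). *)
Definition qinv (R : realType) (F : R -> R) (a : R) : \bar R :=
  ereal_inf [set z%:E | z in [set z | F z = a]].

Definition VoR (R : realType) (alphabar beta : R) (fZ FZ : R -> R) : \bar R :=
  (alphabar%:E * \int[@lebesgue_measure R]_(z in [set z : R | (z%:E <= qinv FZ (beta / alphabar))%E])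
      (z * fZ z)%:E)%E.

From HB Require Import structures.
From mathcomp Require Import all_boot all_order all_algebra.
From mathcomp Require Import all_classical all_reals all_analysis.
From mathcomp Require Import measurable_realfun measurable_fun_approximation.
From mathcomp Require Import lebesgue_integral_nonneg lebesgue_integrable.
From mathcomp Require Import ring lra.
Set Implicit Arguments.
Unset Strict Implicit.
Unset Printing Implicit Defensive.

Import Order.TTheory GRing.Theory Num.Theory.
Local Open Scope classical_set_scope.
Local Open Scope ring_scope.

(* Writing Z = mu + sigma H, the event {Z <= F_Z^{-1}(a)} is the event
   B = {H <= F_H^{-1}(a)}, for every location and scale.  Hence, by the change of
   variables through the density of Z,
     VoR(mu, sigma) = alphabar (mu P(B) + sigma E[H; B]),
   which is affine in mu and in sigma.  Right continuity of the c.d.f. gives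
   P(B) >= a = beta / alphabar > 0, and E[H; B] <= 0 because B is a sublevel set
   of the centred variable H. *)

Section density.
Local Open Scope ereal_scope.
Context d (T : measurableType d) (R : realType) (P : probability T R).
Variables (X : {mfun T >-> R}) (f : R -> R).
Hypothesis Xf : is_density P X f.

Local Notation mu := (@lebesgue_measure R).

(* [distribution P X] is a measure on the default measurable structure of [R],
   [lebesgue_measure] one on [measurableTypeR R]: same sigma-algebra, different
   displays.  The Radon-Nikodym theorem needs both on the same type. *)
Definition lebesgue_distribution : set (measurableTypeR R) -> \bar R :=
  distribution P X.

Let lebesgue_distribution0 : lebesgue_distribution set0 = 0.
Proof. exact: measure0. Qed.

Let lebesgue_distribution_ge0 A : 0 <= lebesgue_distribution A.
Proof. exact: measure_ge0. Qed.

Let lebesgue_distribution_sigma_additive :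
  semi_sigma_additive lebesgue_distribution.
Proof. exact: (@measure_semi_sigma_additive _ _ _ (distribution P X)). Qed.

HB.instance Definition _ := isMeasure.Build _ _ _ lebesgue_distribution
  lebesgue_distribution0 lebesgue_distribution_ge0
  lebesgue_distribution_sigma_additive.

Let lebesgue_distribution_setT : lebesgue_distribution setT = 1.
Proof. exact: probability_setT. Qed.

HB.instance Definition _ := Measure_isProbability.Build _ _ _
  lebesgue_distribution lebesgue_distribution_setT.

Local Notation nu := lebesgue_distribution.
Local Notation dnu := (Radon_Nikodym_SigmaFinite.f nu mu).

Let nu_dominated : nu `<< mu.
Proof.
have [mf [f0 fint]] := Xf.
apply/null_content_dominatesP => A mA muA.
rewrite /lebesgue_distribution /distribution /pushforward fint//.
by apply: null_set_integral => //; apply/measurable_EFinP; exact: measurable_funTS.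
Qed.

Let measurable_dnu : measurable_fun setT dnu.
Proof.
exact/measurable_int/Radon_Nikodym_SigmaFinite.f_integrable/nu_dominated.
Qed.

Lemma density_ae_eq_Radon_Nikodym : ae_eq mu setT (EFin \o f) dnu.
Proof.
have [mf [f0 fint]] := Xf.
have mEf : measurable_fun setT (EFin \o f) by exact/measurable_EFinP.
apply: integral_ae_eq => //.
- apply/integrableP; split => //; rewrite /comp.
  under eq_integral => x _ do rewrite gee0_abs ?lee_fin//.
  by rewrite -fint// preimage_setT probability_setT ltry.
- move=> A _ mA.
  by rewrite -Radon_Nikodym_SigmaFinite.f_integral ?nu_dominated// -fint.
Qed.

Lemma ge0_integral_density (g : R -> \bar R) (E : set R) :
  (forall x, 0 <= g x) -> measurable E -> measurable_fun E g ->
  \int[mu]_(x in E) (g x * (f x)%:E) = \int[P]_(w in X @^-1` E) g (X w).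
Proof.
move=> g0 mE mg.
have [mf _] := Xf.
have mEf : measurable_fun setT (EFin \o f) by exact/measurable_EFinP.
transitivity (\int[nu]_(x in E) g x); last first.
  exact: (@ge0_integral_pushforward _ _ _ (measurableTypeR R) _ X
    (measurable_funPT X)).
rewrite -(Radon_Nikodym_SigmaFinite.change_of_variables nu_dominated)//.
apply: ae_eq_integral => //.
- exact/emeasurable_funM/measurable_funTS.
- exact/emeasurable_funM/measurable_funTS.
- apply: ae_eqe_mul2l.
  by apply: filterS density_ae_eq_Radon_Nikodym => x + _; apply.
Qed.

Lemma integral_id_density (E : set R) : measurable E ->
  \int[mu]_(x in E) (x * f x)%:E = \int[P]_(w in X @^-1` E) (X w)%:E.
Proof.
have [_ [f0 _]] := Xf.
move=> mE; rewrite integralE [RHS]integralE.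
have mEFin : measurable_fun E (fun x : R => x%:E) by exact/measurable_EFinP.
have pos x : (fun x => (x * f x)%:E)^\+ x = (fun x : R => x%:E)^\+ x * (f x)%:E.
  by rewrite !funeposE EFinM maxe_pMl ?mul0e ?lee_fin.
have neg x : (fun x => (x * f x)%:E)^\- x = (fun x : R => x%:E)^\- x * (f x)%:E.
  by rewrite !funenegE EFinM -mulNe maxe_pMl ?mul0e ?lee_fin.
under eq_integral do rewrite pos.
under [X in _ - X]eq_integral do rewrite neg.
rewrite !ge0_integral_density//.
- by congr (_ - _); apply: eq_integral => w _; rewrite ?funeposE ?funenegE.
- exact: measurable_funeneg.
- exact: measurable_funepos.
Qed.

End density.

Definition sublevel {T : Type} {R : realType} (h : T -> R) (Q : \bar R) : set T :=
  [set x | ((h x)%:E <= Q)%E].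

Lemma measurable_sublevel d (T : measurableType d) (R : realType)
    (h : T -> R) (Q : \bar R) :
  measurable_fun setT h -> measurable (sublevel h Q).
Proof.
move=> mh; rewrite -[X in measurable X]setTI.
by apply: measurable_lee => //; exact/measurable_EFinP.
Qed.

Lemma le_qinvP (R : realType) (F : R -> R) (a x : R) :
  (x%:E <= qinv F a)%E <-> (forall z, F z = a -> x <= z).
Proof.
split=> [xQ z Fz | xF].
- by rewrite -lee_fin (le_trans xQ)//; apply: ereal_inf_lbound; exists z.
- by apply: le_ereal_inf_tmp => _ [z Fz <-]; rewrite lee_fin xF.
Qed.

Lemma measure_bigcap_ge d (T : measurableType d) (R : realType)
    (mu : {finite_measure set T -> \bar R}) (F : (set T)^nat) (x : \bar R) :
  (forall n, measurable (F n)) -> {homo F : n m / (n <= m)%N >-> (m <= n)%O} ->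
  (forall n, (x <= mu (F n))%E) -> (x <= mu (\bigcap_n F n))%E.
Proof.
move=> mF ndF xF.
have mI : measurable (\bigcap_n F n) by exact: bigcap_measurable.
have muF0 : (mu (F 0%N) < +oo)%E.
  by rewrite -ge0_fin_numE ?measure_ge0// fin_num_measure.
have cvgF := nonincreasing_cvg_mu muF0 mF mI ndF.
rewrite -(cvg_lim _ cvgF)//; apply: lime_ge; last exact: nearW.
by apply/cvg_ex; exists (mu (\bigcap_n F n)).
Qed.

Section location_scale.
Context d (T : measurableType d) (R : realType) (P : probability T R).
Variable X : {mfun T >-> R}.

Lemma measurable_locscale (mu sigma : R) :
  measurable_fun setT (locscale X mu sigma).
Proof. by apply: measurable_funD => //; exact: measurable_funM. Qed.

HB.instance Definition _ (mu sigma : R) :=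
  isMeasurableFun.Build _ _ _ _ (locscale X mu sigma)
    (measurable_locscale mu sigma).

Lemma cdfR_locscale (mu sigma z : R) : 0 < sigma ->
  cdfR P (locscale X mu sigma) z = cdfR P X ((z - mu) / sigma).
Proof.
move=> sigma_gt0; rewrite /cdfR /locscale; congr (fine (P _)).
by apply/seteqP; split => w /=; rewrite ler_pdivlMr// => ?; lra.
Qed.

Lemma preimage_locscale_le_qinv (mu sigma a : R) : 0 < sigma ->
  locscale X mu sigma @^-1` sublevel id (qinv (cdfR P (locscale X mu sigma)) a) =
  sublevel X (qinv (cdfR P X) a).
Proof.
move=> sigma_gt0; apply/seteqP; split => w /= /le_qinvP wQ; apply/le_qinvP.
- move=> z Fz; have := wQ (mu + sigma * z).
  rewrite cdfR_locscale// (_ : (mu + sigma * z - mu) / sigma = z); last first.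
    by field; rewrite gt_eqF.
  by rewrite /locscale => /(_ Fz); nra.
- move=> z Fz; have := wQ ((z - mu) / sigma); rewrite -cdfR_locscale// => /(_ Fz).
  by rewrite ler_pdivlMr// /locscale; nra.
Qed.

End location_scale.

Section quantile.
Local Open Scope ereal_scope.
Context d (T : measurableType d) (R : realType) (P : probability T R).
Variable X : {mfun T >-> R}.

Let measurable_le (x : R) : measurable [set w | (X w <= x)%R].
Proof. by rewrite -[X in measurable X]setTI; exact: measurable_fun_le. Qed.

Lemma qinv_cdfR_lt_le (a x : R) :
  qinv (cdfR P X) a < x%:E -> a%:E <= P (X @^-1` `]-oo, x]).
Proof.
rewrite ltNge => /negP /le_qinvP /existsNP [z /not_implyP [Fz /negP]].
rewrite -ltNge => zx.
have <- : P [set w | (X w <= z)%R] = a%:E.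
  by rewrite -Fz /cdfR fineK// fin_num_measure// measurable_le.
apply: le_measure; rewrite ?inE ?measurable_le//; first exact: measurable_funPTI.
by move=> w /= Xz; rewrite in_itv/= (le_trans Xz)// ltW.
Qed.

(* Right continuity of the c.d.f. at the quantile; the quantile cannot be -oo
   since P(X <= -n) vanishes. *)
Lemma le_probability_le_qinv (a : R) : (0 < a)%R -> (a <= 1)%R ->
  a%:E <= P (sublevel X (qinv (cdfR P X) a)).
Proof.
rewrite /sublevel => a_gt0 a_le1; case eQ : (qinv _ a) => [q| |].
- have -> : [set w | (X w)%:E <= q%:E] =
      \bigcap_n X @^-1` `]-oo, (q + n.+1%:R^-1)%R].
    rewrite -preimage_bigcap -itvNycEbigcap.
    by apply/seteqP; split => w /=; rewrite in_itv/= lee_fin.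
  apply: measure_bigcap_ge => [n|m n mn|n]; first exact: measurable_funPTI.
    apply/subsetPset => w /=; rewrite !in_itv/= => /le_trans; apply.
    by rewrite lerD2l lef_pV2 ?posrE// ler_nat.
  by apply: qinv_cdfR_lt_le; rewrite eQ lte_fin ltrDl invr_gt0.
- have -> : [set w | (X w)%:E <= +oo] = setT.
    by apply/seteqP; split => w //= _; rewrite leey.
  by rewrite probability_setT lee_fin.
- have : a%:E <= P (\bigcap_n X @^-1` `]-oo, (- n%:R)%R]).
    apply: measure_bigcap_ge => [n|m n mn|n]; first exact: measurable_funPTI.
      apply/subsetPset => w /=; rewrite !in_itv/= => /le_trans; apply.
      by rewrite lerN2 ler_nat.
    by apply: qinv_cdfR_lt_le; rewrite eQ ltNyr.
  have -> : \bigcap_n X @^-1` `]-oo, (- n%:R)%R] = set0.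
    rewrite -subset0 => w /(_ (Num.bound (X w)) I) /=.
    by rewrite in_itv/= leNgt => /negP; apply; rewrite ltrNl unstable.ltrNbound.
  by rewrite measure0 lee_fin leNgt a_gt0.
Qed.

(* If Q <= 0 the integrand is nonpositive on the sublevel set; otherwise it is
   positive on the complement, whose integral is minus that over the set. *)
Lemma integral_sublevel_le0 (Q : \bar R) :
  P.-integrable setT (EFin \o X) -> 'E_P[X] = 0 ->
  \int[P]_(w in sublevel X Q) (X w)%:E <= 0.
Proof.
move=> intX EX; set B := sublevel X Q.
have mB : measurable B by exact: measurable_sublevel.
have [Q_le0|Q_gt0] := leP Q 0.
  rewrite -(integral0 P B); apply: le_integral => //.
  - exact: integrableS intX.
  - exact: integrable0.
  - by move=> w; rewrite inE /B /sublevel/= => /le_trans; apply.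
have : \int[P]_(w in B) (X w)%:E + \int[P]_(w in ~` B) (X w)%:E = 0.
  rewrite -integral_setU//; last by rewrite disj_set2E setICr.
  - by rewrite setUv -EX expectation_def.
  - exact: measurableC.
  - by rewrite setUv; apply/measurable_EFinP.
move=> <-; rewrite leeDl//; apply: integral_ge0 => w.
rewrite /B /sublevel/= => /negP.
by rewrite -ltNge lee_fin => /(lt_trans Q_gt0)/ltW.
Qed.

End quantile.

Section value_of_renewables.
Local Open Scope ereal_scope.
Context d (T : measurableType d) (R : realType) (P : probability T R).
Variable X : {mfun T >-> R}.

Lemma VoR_locscale (alphabar beta mu sigma : R) (f : R -> R) :
  (0 < sigma)%R -> P.-integrable setT (EFin \o X) ->
  is_density P (locscale X mu sigma) f ->
  let B := sublevel X (qinv (cdfR P X) (beta / alphabar)) in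
  VoR alphabar beta f (cdfR P (locscale X mu sigma)) =
  (alphabar * (mu * fine (P B) + sigma * fine (\int[P]_(w in B) (X w)%:E)))%:E.
Proof.
move=> sigma_gt0 intX Zf B.
have mB : measurable B by exact: measurable_sublevel.
have intBX : P.-integrable B (EFin \o X) by exact: integrableS intX.
rewrite /VoR (integral_id_density Zf); last exact: measurable_sublevel.
rewrite preimage_locscale_le_qinv//.
under eq_integral do rewrite EFinD EFinM.
rewrite integralD//; last 2 first.
- exact: finite_measure_integrable_cst.
- exact: integrableZl.
rewrite integral_cst// integralZl// !EFinM EFinD !EFinM fineK ?fin_num_measure//.
by rewrite fineK// integrable_fin_num.
Qed.

End value_of_renewables.

Theorem lemma2 (R : realType) (d : measure_display) (T : measurableType d)
  (P : probability T R) (H : {RV P >-> R}) (g : R -> R) (alphabar beta : R) :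
  0 < beta -> beta <= alphabar ->
  P.-integrable [set: T] (EFin \o H) ->
  P.-integrable [set: T] (EFin \o (fun w => H w ^+ 2)) ->
  ('E_P[H] = 0)%E ->
  variance P H = 1%E ->
  is_density P H g ->
  (forall (mu1 mu2 sigma : R) (f1 f2 : R -> R),
     0 < sigma -> mu1 < mu2 ->
     is_density P (locscale H mu1 sigma) f1 ->
     is_density P (locscale H mu2 sigma) f2 ->
     (VoR alphabar beta f1 (cdfR P (locscale H mu1 sigma))
      < VoR alphabar beta f2 (cdfR P (locscale H mu2 sigma)))%E)
  /\
  (forall (mu sigma1 sigma2 : R) (f1 f2 : R -> R),
     0 < sigma1 -> sigma1 <= sigma2 ->
     is_density P (locscale H mu sigma1) f1 ->
     is_density P (locscale H mu sigma2) f2 ->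
     (VoR alphabar beta f2 (cdfR P (locscale H mu sigma2))
      <= VoR alphabar beta f1 (cdfR P (locscale H mu sigma1)))%E).
Proof.
(* Only the zero mean of H matters: its unit variance and its density merely
   normalise the location-scale family. *)
move=> beta_gt0 le_beta_alphabar intH _ EH _ _.
have alphabar_gt0 : 0 < alphabar by exact: lt_le_trans le_beta_alphabar.
set a := beta / alphabar; set B := sublevel H (qinv (cdfR P H) a).
have a_gt0 : 0 < a by rewrite divr_gt0.
have a_le1 : a <= 1 by rewrite ler_pdivrMr// mul1r.
have PB_gt0 : 0 < fine (P B).
  rewrite (lt_le_trans a_gt0)// -lee_fin fineK ?le_probability_le_qinv//.
  by rewrite fin_num_measure//; exact: measurable_sublevel.
have intB_le0 : fine (\int[P]_(w in B) (H w)%:E) <= 0.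
  by rewrite fine_le0// integral_sublevel_le0.
split=> [mu1 mu2 sigma f1 f2 sigma_gt0 lt_mu ? ?|mu s1 s2 f1 f2 s1_gt0 le_s ? ?].
- by rewrite !VoR_locscale// lte_fin ltr_pM2l// ltrD2r ltr_pM2r.
- rewrite !VoR_locscale ?(lt_le_trans s1_gt0)// lee_fin ler_pM2l// lerD2l.
  exact: ler_wnM2r.
Qed.
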